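(* Consider the following edge-labeled graph (the ''3-color gadget'') with three categories red, blue, green: node set $\{u,v,a,b,c,d\}$ and six edges forming a cycle, namely $\{u,c\}$ labeled blue, $\{c,d\}$ labeled green, $\{d,v\}$ labeled red, $\{v,b\}$ labeled blue, $\{b,a\}$ labeled green, $\{a,u\}$ labeled red. Then the minimum of $\mathrm{CatEdgeClus}(Y)$ over all assignments $Y:\{u,v,a,b,c,d\}\to\{\text{red},\text{blue},\text{green}\}$ equals $3$, and every assignment $Y$ with $\mathrm{CatEdgeClus}(Y)=3$ satisfies $\{Y[u],Y[v]\}=\{\text{red},\text{blue}\}$ (one of $u,v$ is red and the other is blue).
   Context: For an edge-labeled graph with node set $V$, edge collection $E$, categories $C$ and labeling $\ell:E\to C$, and a clustering (node coloring) $Y:V\to C$, an edge $e$ is a mistake ($m_Y(e)=1$) if some endpoint $i\in e$ has $Y[i]\neq\ell(e)$, and $m_Y(e)=0$ otherwise; $\mathrm{CatEdgeClus}(Y)=\sum_{e\in E}m_Y(e)$ is the number of mistakes. *)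

From HB Require Import structures.
From mathcomp Require Import all_boot.
Set Implicit Arguments. Unset Strict Implicit. Unset Printing Implicit Defensive.

Section CatEdgeClus.
Variables (V C : eqType).

Definition mistake (Y : V -> C) (e : seq V * C) : bool :=
  has (fun i => Y i != e.2) e.1.

Definition CatEdgeClus (E : seq (seq V * C)) (Y : V -> C) : nat :=
  count (mistake Y) E.
End CatEdgeClus.

Inductive color := red | blue | green.
Definition color_code (c : color) : 'I_3 :=
  match c with red => inord 0 | blue => inord 1 | green => inord 2 end.
Definition color_decode (i : 'I_3) : color :=
  match val i with 0 => red | 1 => blue | _ => green end.
Lemma color_codeK : cancel color_code color_decode.
Proof. by case; rewrite /color_decode /= inordK. Qed.
HB.instance Definition _ := Finite.copy color (can_type color_codeK).

Inductive gnode := u | v | a | b | c | d.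
Definition gnode_code (x : gnode) : 'I_6 :=
  match x with u => inord 0 | v => inord 1 | a => inord 2
             | b => inord 3 | c => inord 4 | d => inord 5 end.
Definition gnode_decode (i : 'I_6) : gnode :=
  match val i with 0 => u | 1 => v | 2 => a | 3 => b | 4 => c | _ => d end.
Lemma gnode_codeK : cancel gnode_code gnode_decode.
Proof. by case; rewrite /gnode_decode /= inordK. Qed.
HB.instance Definition _ := Finite.copy gnode (can_type gnode_codeK).

Definition gadget_edges : seq (seq gnode * color) :=
  [:: ([:: u; c], blue); ([:: c; d], green); ([:: d; v], red);
      ([:: v; b], blue); ([:: b; a], green); ([:: a; u], red)].

(* Every node of the gadget is incident to two edges with different labels,
   so at each node at least one of its two edges is a mistake: the mistakes
   cover the vertices of a 6-cycle, hence there are at least 3 of them, and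
   exactly 3 only when they form one of the two perfect matchings of the
   cycle.  The complementary matching consists of correctly clustered edges,
   which pins down the colours of u and v. *)

From mathcomp Require Import all_boot.

Set Implicit Arguments.
Unset Strict Implicit.
Unset Printing Implicit Defensive.

Section Mistakes.
Variables (V C : eqType) (Y : V -> C).

Lemma CatEdgeClus_countE (E : seq (seq V * C)) :
  CatEdgeClus E Y = count id [seq mistake Y e | e <- E].
Proof. by rewrite /CatEdgeClus count_map. Qed.

Lemma mistakeN_endpoint (e : seq V * C) :
  ~~ mistake Y e -> {in e.1, forall i, Y i = e.2}.
Proof. by move=> /hasPn correct i /correct /negPn /eqP. Qed.

Lemma mistake_adjacent (i : V) (e f : seq V * C) :
  i \in e.1 -> i \in f.1 -> e.2 != f.2 -> mistake Y e || mistake Y f.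
Proof.
move=> ie if_ labels_neq.
apply: contraT => /norP[/mistakeN_endpoint ce /mistakeN_endpoint cf].
by rewrite -(ce i ie) (cf i if_) eqxx in labels_neq.
Qed.

End Mistakes.

Section SixCycleCover.
Variables x0 x1 x2 x3 x4 x5 : bool.
Hypothesis cover :
  [&& x0 || x1, x1 || x2, x2 || x3, x3 || x4, x4 || x5 & x5 || x0].

Lemma six_cycle_cover_ge3 : 3 <= count id [:: x0; x1; x2; x3; x4; x5].
Proof. by move: cover; case: x0; case: x1; case: x2; case: x3; case: x4; case: x5. Qed.

Lemma six_cycle_cover_eq3 : count id [:: x0; x1; x2; x3; x4; x5] = 3 ->
  [&& ~~ x0, ~~ x2 & ~~ x4] \/ [&& ~~ x1, ~~ x3 & ~~ x5].
Proof.
by move: cover; case: x0; case: x1; case: x2; case: x3; case: x4; case: x5; auto.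
Qed.

End SixCycleCover.

(* Equality on [color] is inherited through ['I_3] and does not reduce by
   computation. *)
Lemma color_eqE (x y : color) : (x == y) =
  match x, y with red, red | blue, blue | green, green => true | _, _ => false end.
Proof. by case: x; case: y; rewrite ?eqxx //; apply/negbTE/eqP. Qed.

Lemma gadget_mistakes_cover (Y : gnode -> color) :
  let m k := mistake Y (nth ([::], red) gadget_edges k) in
  [&& m 0 || m 1, m 1 || m 2, m 2 || m 3, m 3 || m 4, m 4 || m 5 & m 5 || m 0].
Proof.
rewrite /= (mistake_adjacent Y (i := c)) 1?(mistake_adjacent Y (i := d))
  1?(mistake_adjacent Y (i := v)) 1?(mistake_adjacent Y (i := b))
  1?(mistake_adjacent Y (i := a)) 1?(mistake_adjacent Y (i := u)) //.
all: by rewrite /= ?mem_seq2 ?eqxx ?orbT //; apply/eqP.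
Qed.

Theorem mainTheorem3 :
  (exists Y : gnode -> color, CatEdgeClus gadget_edges Y = 3) /\
  (forall Y : gnode -> color, 3 <= CatEdgeClus gadget_edges Y) /\
  (forall Y : gnode -> color, CatEdgeClus gadget_edges Y = 3 ->
     (Y u = red /\ Y v = blue) \/ (Y u = blue /\ Y v = red)).
Proof.
split.
  exists (fun x => match x with u | a => red | v | b => blue | _ => green end).
  by rewrite /CatEdgeClus /mistake /= !color_eqE.
split=> Y; rewrite CatEdgeClus_countE /=.
  exact: six_cycle_cover_ge3 (gadget_mistakes_cover Y).
case/(six_cycle_cover_eq3 (gadget_mistakes_cover Y)) => /and3P[].
  move=> /mistakeN_endpoint uc /mistakeN_endpoint dv _.
  by right; rewrite uc ?dv //= mem_seq2 eqxx ?orbT.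
move=> _ /mistakeN_endpoint vb /mistakeN_endpoint au.
by left; rewrite au ?vb //= mem_seq2 eqxx ?orbT.
Qed.
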